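(* Under the standing setup with $\mathrm{Var}(X_N)>0$, suppose contextual reinforcement holds: $\delta_W\cdot\delta_B\ge 0$. Then: (i) if $D_{ER}\ge D_{NM}$, then $0\le D_{NM}\le D\le\min\{D^+_{MOB},D_{ER}\}$; (ii) if $D_{ER}\le D_{NM}$, then $\max\{D^-_{MOB},D_{ER}\}\le D\le D_{NM}\le 0$; (iii) the bounds in (i) and (ii) are sharp under the assumption $\delta_W\delta_B\ge 0$ (absent additional information).
   Context: Let $(X,Y,N)$ be a random triple with $X\in\{0,1\}$, $Y$ real-valued, $N$ taking values in a finite set $\mathcal N$. Write $p_n=\Pr(N=n)$, $X_n=\mathbb E[X\mid N=n]$, $Y_n=\mathbb E[Y\mid N=n]$, $X_N=\mathbb E[X\mid N]$, $Y_N=\mathbb E[Y\mid N]$. Assume some $n$ has $p_n>0$ and $X_n\in(0,1)$, and fix reals $\underline Y\le\overline Y$ with $\mathbb E[Y\mid X=x,N=n]\in[\underline Y,\overline Y]$ whenever $\Pr(X=x,N=n)>0$. $D=\mathbb E[Y\mid X=1]-\mathbb E[Y\mid X=0]$; $\delta_B=\mathbb E[\mathrm{Cov}(Y,X\mid N)]$; $\delta_W=\mathbb E[\mathrm{Cov}(Y,X_N\mid X)]$; $D_{ER}=\mathrm{Cov}(Y_N,X_N)/\mathrm{Var}(X_N)$; $D_{NM}=\mathbb E[X_NY_N]/\mathbb E[X_N]-\mathbb E[(1-X_N)Y_N]/\mathbb E[1-X_N]$; $D^+_{MOB}=\big(\mathbb E[\min\{Y_N-\underline Y(1-X_N),\overline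 Y X_N\}]-\mathbb E[X]\mathbb E[Y]\big)/\mathrm{Var}(X)$, $D^-_{MOB}=\big(\mathbb E[Y](1-\mathbb E[X])-\mathbb E[\min\{Y_N-\underline Y X_N,\overline Y(1-X_N)\}]\big)/\mathrm{Var}(X)$. Sharpness under an assumption $\mathcal A$: the parameter lies in the interval for every joint distribution satisfying the standing assumptions and $\mathcal A$, and every value in the interval is attained by some joint distribution of $(X,Y,N)$ with the same observed $(p_n,X_n,Y_n)_n$, satisfying the standing bound and $\mathcal A$. *)

From HB Require Import structures.
From mathcomp Require Import all_boot all_order all_algebra.
From mathcomp Require Import all_classical all_reals all_analysis.
Set Implicit Arguments. Unset Strict Implicit. Unset Printing Implicit Defensive.
Import Order.TTheory GRing.Theory Num.Theory.
Local Open Scope classical_set_scope.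
Local Open Scope ring_scope.

(* A joint distribution of (X, Y, N), X in {0,1} (encoded as bool), Y real,
   N in a finite type Nt, given by its (fully general) disintegration:
   lpr x n = Pr(X = x, N = n), and lmu x n = conditional law of Y given
   (X, N) = (x, n) (arbitrary/irrelevant on cells of probability zero). *)
Record law (R : realType) (Nt : finType) := Law {
  lpr : bool -> Nt -> R ;
  lmu : bool -> Nt -> probability R R }.

Section Defs.
Variables (R : realType) (Nt : finType).
Implicit Types (L : law R Nt) (x : bool) (n : Nt).

Definition valid_law L :=
  (forall x n, 0 <= lpr L x n) /\
  (\sum_(n : Nt) \sum_(x : bool) lpr L x n = 1) /\
  (forall x n, 0 < lpr L x n -> (lmu L x n).-integrable setT (fun y : R => y%:E)).

Definition b2R x : R := if x then 1 else 0.

Definition Ex L (g : bool -> R -> Nt -> R) : R :=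
  \sum_(n : Nt) \sum_(x : bool)
     lpr L x n * fine (\int[lmu L x n]_(y in setT) (g x y n)%:E)%E.

Definition pN L n : R := Ex L (fun _ _ m => b2R (m == n)).
Definition pX L x : R := Ex L (fun x' _ _ => b2R (x' == x)).
Definition pXN L x n : R :=
  Ex L (fun x' _ m => b2R ((x' == x) && (m == n))).

Definition condN L (g : bool -> R -> Nt -> R) n : R :=
  Ex L (fun x y m => b2R (m == n) * g x y m) / pN L n.
Definition condX L (g : bool -> R -> Nt -> R) x : R :=
  Ex L (fun x' y m => b2R (x' == x) * g x' y m) / pX L x.
Definition condXN L (g : bool -> R -> Nt -> R) x n : R :=
  Ex L (fun x' y m => b2R ((x' == x) && (m == n)) * g x' y m) / pXN L x n.

Definition XN L n : R := condN L (fun x _ _ => b2R x) n.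
Definition YN L n : R := condN L (fun _ y _ => y) n.

Definition EX L : R := Ex L (fun x _ _ => b2R x).
Definition EY L : R := Ex L (fun _ y _ => y).
Definition VarX L : R := Ex L (fun x _ _ => (b2R x - EX L) ^+ 2).

Definition Dpar L : R :=
  condX L (fun _ y _ => y) true - condX L (fun _ y _ => y) false.

Definition covYX_N L n : R :=
  condN L (fun x y _ => (y - YN L n) * (b2R x - XN L n)) n.
Definition deltaB L : R := Ex L (fun _ _ m => covYX_N L m).

Definition covYXN_X L x : R :=
  condX L (fun _ y m => (y - condX L (fun _ y' _ => y') x) *
                        (XN L m - condX L (fun _ _ m' => XN L m') x)) x.
Definition deltaW L : R := Ex L (fun x _ _ => covYXN_X L x).

Definition EXN L : R := Ex L (fun _ _ m => XN L m).
Definition EYN L : R := Ex L (fun _ _ m => YN L m).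
Definition VarXN L : R := Ex L (fun _ _ m => (XN L m - EXN L) ^+ 2).
Definition CovYNXN L : R :=
  Ex L (fun _ _ m => (YN L m - EYN L) * (XN L m - EXN L)).

Definition D_ER L : R := CovYNXN L / VarXN L.
Definition D_NM L : R :=
  Ex L (fun _ _ m => XN L m * YN L m) / Ex L (fun _ _ m => XN L m)
  - Ex L (fun _ _ m => (1 - XN L m) * YN L m) / Ex L (fun _ _ m => 1 - XN L m).

Definition D_MOBp (Ylo Yhi : R) L : R :=
  (Ex L (fun _ _ m => Num.min (YN L m - Ylo * (1 - XN L m)) (Yhi * XN L m))
   - EX L * EY L) / VarX L.
Definition D_MOBm (Ylo Yhi : R) L : R :=
  (EY L * (1 - EX L)
   - Ex L (fun _ _ m => Num.min (YN L m - Ylo * XN L m) (Yhi * (1 - XN L m))))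
  / VarX L.

Definition standing_bound (Ylo Yhi : R) L :=
  forall x n, 0 < pXN L x n ->
    Ylo <= condXN L (fun _ y _ => y) x n <= Yhi.

Definition standing_overlap L := exists n, 0 < pN L n /\ 0 < XN L n < 1.

Definition same_observed L L' :=
  forall n, [/\ pN L' n = pN L n, XN L' n = XN L n & YN L' n = YN L n].

Definition reinforcement L := 0 <= deltaW L * deltaB L.

End Defs.

From HB Require Import structures.
From mathcomp Require Import all_boot all_order all_algebra.
From mathcomp Require Import all_classical all_reals all_analysis.
From mathcomp Require Import measurable_realfun ring lra.
Import Order.TTheory GRing.Theory Num.Theory.
Local Open Scope ring_scope.

(* Everything is a function of the cell masses Pr(X = x, N = n) and of the cell
   first moments E[Y; X = x, N = n].  With V = Var X, W = Var X_N and
   C = Cov(Y_N, X_N) one has D V = delta_B + C and D W = C - delta_W, while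
   C = D_NM V = D_ER W.  Hence delta_W delta_B = V W (D_ER - D) (D - D_NM):
   reinforcement says exactly that D lies between D_NM and D_ER, and 0 < W < V
   forces D_NM to have the sign of D_ER and a smaller modulus.
   Without assumptions, D V = sum_n t_n - E[X] E[Y], where the X = 1 moment t_n
   of cell n ranges independently over an interval fixed by the observed data and
   [Ylo, Yhi]; the endpoints give D^-_MOB and D^+_MOB, and D_NM is the value taken
   when Y is mean-independent of X given N.  Every such t is realised by a law with
   Y degenerate on each cell, and since D_NM and D_ER depend on the observed data
   only, that law is reinforcing iff its D lies between them. *)

Section RealFacts.
Context {R : realFieldType}.

Lemma mulr_div_cancel (p a : R) : (p = 0 -> a = 0) -> p * (a / p) = a.
Proof.
have [-> /(_ erefl) ->|p0 _] := eqVneq p 0; first by rewrite mul0r.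
by rewrite mulrC divfK.
Qed.

Lemma weighted_covariance {I : finType} {w f g : I -> R} {a b : R} :
  \sum_i w i = 1 -> \sum_i w i * f i = a -> \sum_i w i * g i = b ->
  \sum_i w i * ((f i - a) * (g i - b)) = \sum_i w i * (f i * g i) - a * b.
Proof.
move=> w1 wf wg.
rewrite (eq_bigr (fun i => w i * (f i * g i) - w i * f i * b - w i * g i * a
                           + w i * (a * b))); last by move=> i _; ring.
by rewrite big_split !sumrB /= -!mulr_suml wf wg w1; ring.
Qed.

Lemma psumr_gt0 {I : finType} {F : I -> R} (i : I) :
  (forall j, 0 <= F j) -> 0 < F i -> 0 < \sum_j F j.
Proof. by move=> F0 Fi; rewrite (bigD1 i) //= ltr_wpDr // sumr_ge0. Qed.

Lemma sum_interval_interp {I : finType} {lo hi : I -> R} {z : R} :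
  (forall i, lo i <= hi i) -> \sum_i lo i <= z <= \sum_i hi i ->
  exists2 t : I -> R, (forall i, lo i <= t i <= hi i) & \sum_i t i = z.
Proof.
move=> lohi /andP[loz zhi].
have [e|ne] := eqVneq (\sum_i hi i) (\sum_i lo i).
  exists lo => [i|]; first by rewrite lexx lohi.
  by apply/eqP; rewrite eq_le loz -e zhi.
have gap : 0 < \sum_i hi i - \sum_i lo i.
  by rewrite subr_gt0 lt_neqAle eq_sym ne ler_sum.
set c := (z - \sum_i lo i) / (\sum_i hi i - \sum_i lo i).
have c0 : 0 <= c by apply: divr_ge0; [rewrite subr_ge0 | exact: ltW].
have c1 : c <= 1 by rewrite ler_pdivrMr // mul1r lerB.
exists (fun i => lo i + c * (hi i - lo i)) => [i|].
  by have := lohi i => h; apply/andP; split; nra.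
by rewrite big_split /= -mulr_sumr sumrB /c divfK ?gt_eqF // addrC subrK.
Qed.

Lemma mulr_ge0_between (a b x : R) : 0 <= (b - x) * (x - a) ->
  (a <= b -> a <= x <= b) /\ (b <= a -> b <= x <= a).
Proof. by move=> h; split=> ab; apply/andP; split; nra. Qed.

Lemma scaled_same_sign {a b v w : R} : 0 < w -> w < v -> a * v = b * w ->
  (a <= b -> 0 <= a) /\ (b <= a -> a <= 0).
Proof. by move=> w0 wv e; split=> ab; nra. Qed.

Lemma max_subr_min (a b s : R) : Num.max a (s - b) = s - Num.min (s - a) b.
Proof. by case: leP => h1; case: leP => h2; lra. Qed.

Lemma decomposition_product_ge0 {c d a b v w : R} :
  0 < v -> 0 < w -> c = a * v -> c = b * w ->
  (0 <= (c - d * w) * (d * v - c)) = (0 <= (b - d) * (d - a)).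
Proof.
move=> v0 w0 ea eb.
have -> : (c - d * w) * (d * v - c) = (b - d) * (d - a) * (w * v).
  by rewrite {1}eb ea; ring.
by rewrite pmulr_lge0 // mulr_gt0.
Qed.

End RealFacts.

Section Model.
Context {R : realType} {Nt : finType}.
Implicit Types (L : law R Nt) (x : bool) (n : Nt).

Definition cellmean L x n : R := fine (\int[lmu L x n]_(y in setT) y%:E)%E.
Definition moment L x n : R := lpr L x n * cellmean L x n.
Definition ymoment L n : R := moment L true n + moment L false n.

Lemma sum_b2R_eq (f : Nt -> R) n : \sum_m b2R R (m == n) * f m = f n.
Proof.
rewrite (bigD1 n) //= eqxx mul1r big1 ?addr0 // => m /negbTE ->.
by rewrite mul0r.
Qed.

Section CellSums.
Context {L : law R Nt} (hv : valid_law L).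

Lemma lpr_ge0 x n : 0 <= lpr L x n.
Proof. by case: hv => ->. Qed.

Lemma Ex_affine (g : bool -> R -> Nt -> R) (a b : bool -> Nt -> R) :
  (forall x y n, g x y n = a x n + b x n * y) ->
  Ex L g = \sum_n \sum_x (lpr L x n * a x n + b x n * moment L x n).
Proof.
move=> hg; apply: eq_bigr => n _; apply: eq_bigr => x _.
rewrite /moment mulrCA -mulrDr.
have := lpr_ge0 x n; rewrite le0r => /orP[/eqP->|qpos]; first by rewrite !mul0r.
congr (_ * _); case: hv => _ [_ /(_ x n qpos) yint].
rewrite (eq_integral (fun y => (a x n)%:E + (b x n)%:E * y%:E)%E); last first.
  by move=> y _; rewrite hg EFinD EFinM.
rewrite integralD //; last 2 first.
- exact: finite_measure_integrable_cst.
- exact: integrableZl.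
rewrite integralZl // integral_cst //.
set total := (X in (_ * X + _)%E).
have -> : total = 1%E by exact: probability_setT.
rewrite mule1 /cellmean.
by rewrite -[in LHS](fineK (integrable_fin_num measurableT yint)) -EFinM -EFinD.
Qed.

Lemma Ex_cell (h : bool -> Nt -> R) :
  Ex L (fun x _ m => h x m) = \sum_m \sum_x lpr L x m * h x m.
Proof.
rewrite (@Ex_affine _ h (fun _ _ => 0)) => [|*]; last by rewrite mul0r addr0.
by apply: eq_bigr => m _; apply: eq_bigr => x _; rewrite mul0r addr0.
Qed.

Lemma pN_E n : pN L n = lpr L true n + lpr L false n.
Proof.
rewrite /pN Ex_cell -[RHS](sum_b2R_eq (fun m => lpr L true m + lpr L false m)).
by apply: eq_bigr => m _; rewrite big_bool /=; ring.
Qed.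

Lemma pX_E x : pX L x = \sum_n lpr L x n.
Proof.
rewrite /pX Ex_cell; apply: eq_bigr => m _.
by rewrite big_bool; case: x; rewrite /b2R /=; ring.
Qed.

Lemma pXN_E x n : pXN L x n = lpr L x n.
Proof.
rewrite /pXN Ex_cell -[RHS](sum_b2R_eq (lpr L x)); apply: eq_bigr => m _.
by rewrite big_bool; case: x; case: (m == n); rewrite /b2R /=; ring.
Qed.

Lemma ExN (h : Nt -> R) : Ex L (fun _ _ m => h m) = \sum_m pN L m * h m.
Proof. by rewrite Ex_cell; apply: eq_bigr => m _; rewrite big_bool pN_E mulrDl. Qed.

Lemma ExX (h : bool -> R) : Ex L (fun x _ _ => h x) = \sum_x pX L x * h x.
Proof.
by rewrite Ex_cell exchange_big; apply: eq_bigr => x _; rewrite pX_E mulr_suml.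
Qed.

Lemma sum_pN : \sum_n pN L n = 1.
Proof. by case: hv => _ [<- _]; apply: eq_bigr => n _; rewrite pN_E big_bool. Qed.

Lemma lpr_eq0 x n : pN L n = 0 -> lpr L x n = 0.
Proof.
rewrite pN_E => e; have h1 := lpr_ge0 true n; have h0 := lpr_ge0 false n.
by case: x; lra.
Qed.

Lemma condN_E (g : bool -> R -> Nt -> R) (a b : bool -> Nt -> R) n :
  (forall x y m, g x y m = a x m + b x m * y) ->
  condN L g n = (\sum_x (lpr L x n * a x n + b x n * moment L x n)) / pN L n.
Proof.
move=> hg; rewrite /condN; congr (_ / _).
rewrite (@Ex_affine _ (fun x m => b2R R (m == n) * a x m)
                      (fun x m => b2R R (m == n) * b x m)) => [|*]; last first.
  by rewrite hg; ring.
rewrite -[RHS](sum_b2R_eq (fun m => \sum_x (lpr L x m * a x m + b x m * moment L x m))).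
by apply: eq_bigr => m _; rewrite mulr_sumr; apply: eq_bigr => x _; ring.
Qed.

Lemma condX_E (g : bool -> R -> Nt -> R) (a b : Nt -> R) x :
  (forall x' y m, g x' y m = a m + b m * y) ->
  condX L g x = (\sum_n (lpr L x n * a n + b n * moment L x n)) / pX L x.
Proof.
move=> hg; rewrite /condX; congr (_ / _).
rewrite (@Ex_affine _ (fun x' m => b2R R (x' == x) * a m)
                      (fun x' m => b2R R (x' == x) * b m)) => [|*]; last first.
  by rewrite hg; ring.
by apply: eq_bigr => m _; rewrite big_bool; case: x; rewrite /b2R /=; ring.
Qed.

Lemma condXN_E x n :
  condXN L (fun _ y _ => y) x n = moment L x n / lpr L x n.
Proof.
rewrite /condXN pXN_E; congr (_ / _).
rewrite (@Ex_affine _ (fun _ _ => 0)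
          (fun x' m => b2R R ((x' == x) && (m == n)))) => [|*]; last first.
  by rewrite add0r.
rewrite -[RHS](sum_b2R_eq (moment L x)); apply: eq_bigr => m _.
by rewrite big_bool; case: x; case: (m == n); rewrite /b2R /=; ring.
Qed.

Lemma moment_eq0 x n : pN L n = 0 -> moment L x n = 0.
Proof. by move=> /(lpr_eq0 x) q0; rewrite /moment q0 mul0r. Qed.

Lemma XN_E n : XN L n = lpr L true n / pN L n.
Proof.
rewrite /XN (@condN_E _ (fun x _ => b2R R x) (fun _ _ => 0)) => [|*]; last first.
  by rewrite mul0r addr0.
by rewrite big_bool /b2R /= !(mul0r, mulr0, addr0, mulr1).
Qed.

Lemma pN_ge0 n : 0 <= pN L n.
Proof. by rewrite pN_E addr_ge0 ?lpr_ge0. Qed.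

Lemma XN_ge0 n : 0 <= XN L n.
Proof. by rewrite XN_E divr_ge0 ?lpr_ge0 ?pN_ge0. Qed.

Lemma pN_XN n : pN L n * XN L n = lpr L true n.
Proof. by rewrite XN_E mulr_div_cancel // => /(lpr_eq0 true). Qed.

Lemma pN_1subXN n : pN L n * (1 - XN L n) = lpr L false n.
Proof. by rewrite mulrBr mulr1 pN_XN pN_E; ring. Qed.

Lemma YN_E n : YN L n = ymoment L n / pN L n.
Proof.
rewrite /YN (@condN_E _ (fun _ _ => 0) (fun _ _ => 1)) => [|*]; last first.
  by rewrite mul1r add0r.
by rewrite big_bool /= !(mulr0, mul1r, add0r).
Qed.

Lemma pN_YN n : pN L n * YN L n = ymoment L n.
Proof.
rewrite YN_E mulr_div_cancel // => p0.
by rewrite /ymoment !moment_eq0 ?addr0.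
Qed.

Lemma pN_covYX_N n :
  pN L n * covYX_N L n = moment L true n - ymoment L n * XN L n.
Proof.
rewrite /covYX_N (@condN_E _ (fun x _ => - (YN L n * (b2R R x - XN L n)))
                              (fun x _ => b2R R x - XN L n)) => [|*]; last first.
  by ring.
rewrite mulr_div_cancel => [|p0]; last first.
  by rewrite big1 // => x _; rewrite lpr_eq0 // moment_eq0 // !mulr0 mul0r addr0.
by rewrite big_bool /b2R /ymoment /= -pN_1subXN -pN_XN; ring.
Qed.

Lemma EX_E : EX L = \sum_n lpr L true n.
Proof. by rewrite /EX ExX big_bool pX_E /b2R /= mulr1 mulr0 addr0. Qed.

Lemma pX_false : pX L false = 1 - EX L.
Proof.
rewrite pX_E EX_E -sum_pN -sumrB; apply: eq_bigr => n _.
by rewrite pN_E; ring.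
Qed.

Lemma EY_E : EY L = \sum_n ymoment L n.
Proof.
rewrite /EY (@Ex_affine _ (fun _ _ => 0) (fun _ _ => 1)) => [|*]; last first.
  by rewrite mul1r add0r.
by apply: eq_bigr => n _; rewrite big_bool /= !(mulr0, mul1r, add0r).
Qed.

Lemma sum_pN_XN : \sum_n pN L n * XN L n = EX L.
Proof. by rewrite EX_E; apply: eq_bigr => n _; rewrite pN_XN. Qed.

Lemma sum_pN_YN : \sum_n pN L n * YN L n = EY L.
Proof. by rewrite EY_E; apply: eq_bigr => n _; rewrite pN_YN. Qed.

Lemma EXN_E : EXN L = EX L.
Proof. by rewrite /EXN ExN sum_pN_XN. Qed.

Lemma EYN_E : EYN L = EY L.
Proof. by rewrite /EYN ExN sum_pN_YN. Qed.

Lemma sum_pN_XNYN :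
  \sum_n pN L n * (XN L n * YN L n) = \sum_n ymoment L n * XN L n.
Proof. by apply: eq_bigr => n _; rewrite mulrCA pN_YN mulrC. Qed.

Lemma CovYNXN_E : CovYNXN L = \sum_n ymoment L n * XN L n - EX L * EY L.
Proof.
rewrite /CovYNXN EXN_E EYN_E ExN.
rewrite (weighted_covariance sum_pN sum_pN_YN sum_pN_XN) mulrC.
by under eq_bigr => n _ do rewrite [YN L n * _]mulrC; rewrite sum_pN_XNYN.
Qed.

Lemma VarXN_E : VarXN L = \sum_n lpr L true n * XN L n - EX L ^+ 2.
Proof.
rewrite /VarXN EXN_E ExN (eq_bigr _ (fun n _ => congr1 _ (expr2 _))).
rewrite (weighted_covariance sum_pN sum_pN_XN sum_pN_XN) expr2.
by congr (_ - _); apply: eq_bigr => n _; rewrite mulrA pN_XN.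
Qed.

Lemma VarX_E : VarX L = EX L * (1 - EX L).
Proof. by rewrite /VarX ExX big_bool pX_false pX_E -EX_E /b2R /=; ring. Qed.

Lemma VarX_sub_VarXN : VarX L - VarXN L = \sum_n XN L n * lpr L false n.
Proof.
have -> : VarX L - VarXN L = EX L - \sum_n lpr L true n * XN L n.
  by rewrite VarX_E VarXN_E; ring.
rewrite EX_E -sumrB; apply: eq_bigr => n _.
by rewrite -pN_1subXN -pN_XN; ring.
Qed.

Lemma Dpar_E : Dpar L = (\sum_n moment L true n) / EX L
                        - (\sum_n moment L false n) / (1 - EX L).
Proof.
rewrite /Dpar !(@condX_E _ (fun _ => 0) (fun _ => 1)) => [|*|*]; last 2 first.
- by rewrite mul1r add0r.
- by rewrite mul1r add0r.
rewrite pX_false pX_E -EX_E.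
by congr (_ / _ - _ / _); apply: eq_bigr => n _; rewrite mulr0 mul1r add0r.
Qed.

Lemma D_NM_E : D_NM L = (\sum_n ymoment L n * XN L n) / EX L
                        - (EY L - \sum_n ymoment L n * XN L n) / (1 - EX L).
Proof.
rewrite /D_NM !ExN sum_pN_XNYN sum_pN_XN.
have -> : \sum_n pN L n * ((1 - XN L n) * YN L n)
          = EY L - \sum_n ymoment L n * XN L n.
  rewrite -sum_pN_YN -sum_pN_XNYN -sumrB.
  by apply: eq_bigr => n _; ring.
have -> : \sum_n pN L n * (1 - XN L n) = 1 - EX L.
  rewrite (eq_bigr (fun n => pN L n - pN L n * XN L n)) => [|n _].
    by rewrite sumrB sum_pN sum_pN_XN.
  by rewrite mulrBr mulr1.
by [].
Qed.

Lemma sum_lprF_XN :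
  \sum_n lpr L false n * XN L n = EX L - \sum_n lpr L true n * XN L n.
Proof.
rewrite -sum_pN_XN -sumrB; apply: eq_bigr => n _.
by rewrite pN_E; ring.
Qed.

Lemma pX_covYXN_X x : pX L x != 0 ->
  pX L x * covYXN_X L x = \sum_n moment L x n * XN L n
    - (\sum_n moment L x n) * (\sum_n lpr L x n * XN L n) / pX L x.
Proof.
move=> px0.
have cY : condX L (fun _ y _ => y) x = (\sum_n moment L x n) / pX L x.
  rewrite (@condX_E _ (fun _ => 0) (fun _ => 1)) => [|*]; last first.
    by rewrite mul1r add0r.
  by congr (_ / _); apply: eq_bigr => n _; rewrite mulr0 mul1r add0r.
have cX : condX L (fun _ _ m => XN L m) x
          = (\sum_n lpr L x n * XN L n) / pX L x.
  rewrite (@condX_E _ (XN L) (fun _ => 0)) => [|*]; last first.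
    by rewrite mul0r addr0.
  by congr (_ / _); apply: eq_bigr => n _; rewrite mul0r addr0.
rewrite /covYXN_X.
set c := condX L (fun _ y _ => y) x; set e := condX L (fun _ _ m => XN L m) x.
rewrite (@condX_E _ (fun m => - (c * (XN L m - e))) (fun m => XN L m - e))
  => [|*]; last by ring.
rewrite (eq_bigr (fun n => moment L x n * XN L n - e * moment L x n
    - c * (lpr L x n * XN L n) + c * e * lpr L x n)) => [|n _]; last by ring.
rewrite big_split !sumrB /= -!mulr_sumr -pX_E /c /e cY cX.
by field.
Qed.

End CellSums.
End Model.

Section Overlap.
Context {R : realType} {Nt : finType} {L : law R Nt}.
Hypotheses (hv : valid_law L) (ov : standing_overlap L).

Lemma EX_itv : 0 < EX L < 1.
Proof.
case: ov => n [pn /andP[xn0 xn1]].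
have q0 := lpr_ge0 hv.
rewrite -[EX L < 1]subr_gt0 -(pX_false hv) (pX_E hv) (EX_E hv).
apply/andP; split; apply: (psumr_gt0 n) => //.
- by rewrite -(pN_XN hv) mulr_gt0.
- by rewrite -(pN_1subXN hv) mulr_gt0 // subr_gt0.
Qed.

Lemma VarX_gt0 : 0 < VarX L.
Proof. by have /andP[e0 e1] := EX_itv; rewrite (VarX_E hv) mulr_gt0 // subr_gt0. Qed.

Lemma VarXN_lt_VarX : VarXN L < VarX L.
Proof.
case: ov => n [pn /andP[xn0 xn1]].
rewrite -subr_gt0 (VarX_sub_VarXN hv); apply: (psumr_gt0 n).
  by move=> m; rewrite mulr_ge0 ?(XN_ge0 hv) ?(lpr_ge0 hv).
by rewrite mulr_gt0 // -(pN_1subXN hv) mulr_gt0 // subr_gt0.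
Qed.

Lemma Dpar_VarX : Dpar L * VarX L = \sum_n moment L true n - EX L * EY L.
Proof.
have /andP[e0 e1] := EX_itv.
rewrite (Dpar_E hv) (VarX_E hv) (EY_E hv) /ymoment big_split /=.
by field; rewrite !gt_eqF // subr_gt0.
Qed.

Lemma D_NM_VarX : D_NM L * VarX L = CovYNXN L.
Proof.
have /andP[e0 e1] := EX_itv.
rewrite (D_NM_E hv) (VarX_E hv) (CovYNXN_E hv).
by field; rewrite !gt_eqF // subr_gt0.
Qed.

Lemma deltaB_E : deltaB L = Dpar L * VarX L - CovYNXN L.
Proof.
rewrite Dpar_VarX (CovYNXN_E hv) /deltaB (ExN hv).
rewrite (eq_bigr _ (fun n _ => pN_covYX_N hv n)) sumrB; ring.
Qed.

Lemma deltaW_E : deltaW L = CovYNXN L - Dpar L * VarXN L.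
Proof.
have /andP[e0 e1] := EX_itv.
have pXT : pX L true = EX L by rewrite (pX_E hv) (EX_E hv).
rewrite /deltaW (ExX hv) big_bool /= !(pX_covYXN_X hv); last 2 first.
- by rewrite (pX_false hv) gt_eqF ?subr_gt0.
- by rewrite pXT gt_eqF.
rewrite pXT (pX_false hv) (sum_lprF_XN hv) (CovYNXN_E hv) (Dpar_E hv).
rewrite (VarXN_E hv) (EY_E hv) /ymoment !big_split /=.
rewrite (eq_bigr _ (fun n _ => mulrDl _ _ (XN L n))) big_split /=.
by field; rewrite !gt_eqF // subr_gt0.
Qed.

End Overlap.

Section Reinforcement.
Context {R : realType} {Nt : finType} {L : law R Nt}.
Hypotheses (hv : valid_law L) (ov : standing_overlap L) (hW : 0 < VarXN L).

Lemma D_ER_VarXN : D_ER L * VarXN L = CovYNXN L.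
Proof. by rewrite /D_ER divfK ?gt_eqF. Qed.

Lemma D_NM_VarX_D_ER : D_NM L * VarX L = D_ER L * VarXN L.
Proof. by rewrite (D_NM_VarX hv ov) D_ER_VarXN. Qed.

Lemma reinforcementE :
  reinforcement L <-> 0 <= (D_ER L - Dpar L) * (Dpar L - D_NM L).
Proof.
rewrite /reinforcement (deltaW_E hv ov) (deltaB_E hv ov).
rewrite (decomposition_product_ge0 (VarX_gt0 hv ov) hW
           (esym (D_NM_VarX hv ov)) (esym D_ER_VarXN)).
exact: iff_refl.
Qed.

End Reinforcement.

Section Bounds.
Context {R : realType} {Nt : finType} (Ylo Yhi : R).
Implicit Types (L : law R Nt).

Definition moment_lo L n :=
  Num.max (Ylo * lpr L true n) (ymoment L n - Yhi * lpr L false n).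
Definition moment_hi L n :=
  Num.min (Yhi * lpr L true n) (ymoment L n - Ylo * lpr L false n).

Lemma moment_boundsP L n t :
  moment_lo L n <= t <= moment_hi L n <->
  Ylo * lpr L true n <= t <= Yhi * lpr L true n /\
  Ylo * lpr L false n <= ymoment L n - t <= Yhi * lpr L false n.
Proof.
rewrite ge_max le_min; split.
  by move=> /andP[/andP[a b] /andP[c d]]; split; apply/andP; split; lra.
by move=> [/andP[a b] /andP[c d]]; apply/andP; split; apply/andP; split; lra.
Qed.

Section Cells.
Context {L : law R Nt} (hv : valid_law L) (sb : standing_bound Ylo Yhi L).

Lemma moment_bounds x n : Ylo * lpr L x n <= moment L x n <= Yhi * lpr L x n.
Proof.
have := lpr_ge0 hv x n; rewrite le0r => /orP[/eqP q0|qpos].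
  by rewrite /moment q0 !(mulr0, mul0r) lexx.
have := sb x n; rewrite (pXN_E hv) (condXN_E hv) => /(_ qpos).
by rewrite ler_pdivlMr // ler_pdivrMr.
Qed.

Lemma moment_in_bounds n : moment_lo L n <= moment L true n <= moment_hi L n.
Proof.
apply/moment_boundsP; split; first exact: moment_bounds.
by rewrite /ymoment [moment L true n + _]addrC addrK moment_bounds.
Qed.

Lemma moment_lo_le_hi n : moment_lo L n <= moment_hi L n.
Proof. by have /andP[a b] := moment_in_bounds n; apply: le_trans b. Qed.

Lemma YN_bounds n : 0 < pN L n -> Ylo <= YN L n <= Yhi.
Proof.
move=> pn; have /andP[a1 b1] := moment_bounds true n.
have /andP[a0 b0] := moment_bounds false n.
rewrite -(ler_pM2l pn) -[YN L n <= _](ler_pM2l pn) (pN_YN hv) (pN_E hv) /ymoment.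
by apply/andP; split; lra.
Qed.

Lemma YN_lpr_bounds x n : Ylo * lpr L x n <= YN L n * lpr L x n <= Yhi * lpr L x n.
Proof.
have := pN_ge0 hv n; rewrite le0r => /orP[/eqP p0|pn].
  by rewrite (lpr_eq0 hv x n p0) !mulr0 lexx.
have /andP[a b] := YN_bounds n pn; have q0 := lpr_ge0 hv x n.
by rewrite !ler_wpM2r.
Qed.

Lemma flat_moment_in_bounds n :
  moment_lo L n <= ymoment L n * XN L n <= moment_hi L n.
Proof.
have e1 : ymoment L n * XN L n = YN L n * lpr L true n.
  by rewrite -(pN_YN hv) -(pN_XN hv); ring.
have e0 : ymoment L n - ymoment L n * XN L n = YN L n * lpr L false n.
  by rewrite -(pN_1subXN hv) -(pN_YN hv); ring.
by apply/moment_boundsP; rewrite e0 e1; split; apply: YN_lpr_bounds.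
Qed.

End Cells.

Section Identified.
Context {L : law R Nt} (hv : valid_law L) (ov : standing_overlap L).

Lemma D_MOBp_VarX :
  D_MOBp Ylo Yhi L * VarX L = \sum_n moment_hi L n - EX L * EY L.
Proof.
rewrite /D_MOBp divfK ?gt_eqF ?(VarX_gt0 hv ov) // (ExN hv).
congr (_ - _); apply: eq_bigr => n _.
rewrite minr_pMr ?(pN_ge0 hv) // mulrBr (pN_YN hv) minC.
by rewrite [pN L n * (Ylo * _)]mulrCA (pN_1subXN hv)
  [pN L n * (Yhi * _)]mulrCA (pN_XN hv).
Qed.

Lemma D_MOBm_VarX :
  D_MOBm Ylo Yhi L * VarX L = \sum_n moment_lo L n - EX L * EY L.
Proof.
rewrite /D_MOBm divfK ?gt_eqF ?(VarX_gt0 hv ov) // (ExN hv).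
rewrite /moment_lo (eq_bigr _ (fun n _ => max_subr_min _ _ _)) sumrB -(EY_E hv).
have -> : \sum_n pN L n * Num.min (YN L n - Ylo * XN L n) (Yhi * (1 - XN L n))
          = \sum_n Num.min (ymoment L n - Ylo * lpr L true n) (Yhi * lpr L false n).
  apply: eq_bigr => n _; rewrite minr_pMr ?(pN_ge0 hv) // mulrBr (pN_YN hv).
  by rewrite [pN L n * (Ylo * _)]mulrCA (pN_XN hv)
    [pN L n * (Yhi * _)]mulrCA (pN_1subXN hv).
ring.
Qed.

Hypothesis sb : standing_bound Ylo Yhi L.

Lemma Dpar_in_MOB : D_MOBm Ylo Yhi L <= Dpar L <= D_MOBp Ylo Yhi L.
Proof.
have hV := VarX_gt0 hv ov.
rewrite -(ler_pM2r hV) -[Dpar L <= _](ler_pM2r hV).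
rewrite (Dpar_VarX hv ov) D_MOBp_VarX D_MOBm_VarX.
by rewrite !lerD2r; apply/andP; split; apply: ler_sum => n _;
  have /andP[] := moment_in_bounds hv sb n.
Qed.

Lemma D_NM_in_MOB : D_MOBm Ylo Yhi L <= D_NM L <= D_MOBp Ylo Yhi L.
Proof.
have hV := VarX_gt0 hv ov.
rewrite -(ler_pM2r hV) -[D_NM L <= _](ler_pM2r hV).
rewrite (D_NM_VarX hv ov) (CovYNXN_E hv).
rewrite D_MOBp_VarX D_MOBm_VarX.
by rewrite !lerD2r; apply/andP; split; apply: ler_sum => n _;
  have /andP[] := flat_moment_in_bounds hv sb n.
Qed.

End Identified.
End Bounds.

Section SameObserved.
Context {R : realType} {Nt : finType} {L L' : law R Nt}.
Hypotheses (hv : valid_law L) (hv' : valid_law L') (obs : same_observed L L').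

Lemma pN_obs : pN L' = pN L.
Proof. by apply: funext => n; case: (obs n). Qed.

Lemma XN_obs : XN L' = XN L.
Proof. by apply: funext => n; case: (obs n). Qed.

Lemma YN_obs : YN L' = YN L.
Proof. by apply: funext => n; case: (obs n). Qed.

Lemma overlap_obs : standing_overlap L -> standing_overlap L'.
Proof. by rewrite /standing_overlap pN_obs XN_obs. Qed.

Lemma EX_obs : EX L' = EX L.
Proof. by rewrite -(sum_pN_XN hv) -(sum_pN_XN hv') pN_obs XN_obs. Qed.

Lemma EY_obs : EY L' = EY L.
Proof. by rewrite -(sum_pN_YN hv) -(sum_pN_YN hv') pN_obs YN_obs. Qed.

Lemma VarX_obs : VarX L' = VarX L.
Proof. by rewrite (VarX_E hv) (VarX_E hv') EX_obs. Qed.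

Lemma VarXN_obs : VarXN L' = VarXN L.
Proof. by rewrite /VarXN /EXN !(ExN hv) !(ExN hv') pN_obs XN_obs. Qed.

Lemma D_NM_obs : D_NM L' = D_NM L.
Proof. by rewrite /D_NM !(ExN hv) !(ExN hv') pN_obs XN_obs YN_obs. Qed.

Lemma D_ER_obs : D_ER L' = D_ER L.
Proof.
by rewrite /D_ER /CovYNXN /EXN /EYN !(ExN hv) !(ExN hv') pN_obs XN_obs YN_obs VarXN_obs.
Qed.

End SameObserved.

Section DiracLaw.
Context {R : realType} {Nt : finType}.

Lemma dirac_integrable (a : R) :
  (\d_a : probability R R).-integrable setT (fun y : R => y%:E).
Proof.
apply/integrableP; split; first exact/measurable_EFinP.
rewrite integral_dirac //=; last first.
  by apply: measurableT_comp => //; exact/measurable_EFinP.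
by rewrite diracE in_setT mul1e ltry.
Qed.

Lemma dirac_mean (a : R) :
  fine (\int[(\d_a : probability R R)]_(y in setT) y%:E)%E = a.
Proof. by rewrite integral_dirac //= indicE in_setT mul1r. Qed.

Definition dirac_law (q m : bool -> Nt -> R) : law R Nt :=
  @Law R Nt q (fun x n => (\d_(m x n / q x n) : probability R R)).

Lemma dirac_law_valid (q m : bool -> Nt -> R) :
  (forall x n, 0 <= q x n) -> \sum_n \sum_x q x n = 1 ->
  valid_law (dirac_law q m).
Proof. by move=> q0 q1; split=> //; split=> // x n _; exact: dirac_integrable. Qed.

Lemma moment_dirac_law (q m : bool -> Nt -> R) x n :
  (q x n = 0 -> m x n = 0) -> moment (dirac_law q m) x n = m x n.
Proof. by move=> qm; rewrite /moment /cellmean dirac_mean mulr_div_cancel. Qed.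

End DiracLaw.

(* Y sits at a single point on every cell; only the split of each ymoment between
   the two X-cells is changed, and the observed data do not see it. *)
Definition moment_law {R : realType} {Nt : finType} (L : law R Nt) (t : Nt -> R) :=
  dirac_law (lpr L) (fun x n => if x then t n else ymoment L n - t n).

Section MomentLaw.
Context {R : realType} {Nt : finType} (Ylo Yhi : R) {L : law R Nt}.
Hypotheses (hv : valid_law L) (ov : standing_overlap L).
Variable t : Nt -> R.
Hypothesis ht : forall n, moment_lo Ylo Yhi L n <= t n <= moment_hi Ylo Yhi L n.

Lemma moment_law_valid : valid_law (moment_law L t).
Proof. by case: hv => q0 [q1 _]; apply: dirac_law_valid. Qed.

Lemma moment_moment_law x n :
  moment (moment_law L t) x n = if x then t n else ymoment L n - t n.
Proof.
have /moment_boundsP[/andP[a b] /andP[c d]] := ht n.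
by apply: moment_dirac_law; case: x => /= q0; rewrite q0 !mulr0 in a b c d; lra.
Qed.

Lemma ymoment_moment_law n : ymoment (moment_law L t) n = ymoment L n.
Proof. by rewrite /ymoment !moment_moment_law addrC subrK. Qed.

Lemma moment_law_obs : same_observed L (moment_law L t).
Proof.
move=> n; have hv' := moment_law_valid.
by rewrite (pN_E hv) (pN_E hv') (XN_E hv) (XN_E hv') (YN_E hv) (YN_E hv')
  ymoment_moment_law (pN_E hv) (pN_E hv').
Qed.

Lemma moment_law_bound : standing_bound Ylo Yhi (moment_law L t).
Proof.
have hv' := moment_law_valid.
move=> x n; rewrite (pXN_E hv') (condXN_E hv') moment_moment_law /= => qpos.
have /moment_boundsP[/andP[a b] /andP[c d]] := ht n.
rewrite ler_pdivlMr // ler_pdivrMr //.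
by case: x qpos => _; apply/andP; split.
Qed.

Lemma Dpar_moment_law :
  Dpar (moment_law L t) * VarX L = \sum_n t n - EX L * EY L.
Proof.
have hv' := moment_law_valid; have obs := moment_law_obs.
rewrite -(VarX_obs hv hv' obs) (Dpar_VarX hv' (overlap_obs obs ov)).
rewrite (EX_obs hv hv' obs) (EY_obs hv hv' obs).
by under eq_bigr do rewrite moment_moment_law.
Qed.

End MomentLaw.

Section Sharpness.
Context {R : realType} {Nt : finType} (Ylo Yhi : R) {L : law R Nt}.
Hypotheses (hv : valid_law L) (ov : standing_overlap L)
  (sb : standing_bound Ylo Yhi L).

Lemma MOB_bounds_sharp d : D_MOBm Ylo Yhi L <= d <= D_MOBp Ylo Yhi L ->
  exists L' : law R Nt,
    [/\ valid_law L', same_observed L L', standing_bound Ylo Yhi L' & Dpar L' = d].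
Proof.
have hV := VarX_gt0 hv ov.
rewrite -(ler_pM2r hV) -[d <= _](ler_pM2r hV).
rewrite (D_MOBm_VarX Ylo Yhi hv ov) (D_MOBp_VarX Ylo Yhi hv ov).
rewrite -(lerD2r (EX L * EY L)) -[_ <= \sum_n _ - _](lerD2r (EX L * EY L)) !subrK.
move=> /(sum_interval_interp (moment_lo_le_hi Ylo Yhi hv sb)) [t ht sum_t].
exists (moment_law L t); split.
- exact: moment_law_valid.
- exact: moment_law_obs.
- exact: moment_law_bound.
- apply: (mulIf (lt0r_neq0 hV)).
  by rewrite (Dpar_moment_law Ylo Yhi hv ov t ht) sum_t addrK.
Qed.

Hypothesis hW : 0 < VarXN L.

Lemma reinforcement_sharp d :
  D_MOBm Ylo Yhi L <= d <= D_MOBp Ylo Yhi L ->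
  0 <= (D_ER L - d) * (d - D_NM L) ->
  exists L' : law R Nt,
    [/\ valid_law L', same_observed L L', standing_bound Ylo Yhi L',
        reinforcement L' & Dpar L' = d].
Proof.
move=> /MOB_bounds_sharp [L' [hv' obs sb' dL']] between.
exists L'; split=> //.
have hW' : 0 < VarXN L' by rewrite (VarXN_obs hv hv' obs).
apply/(reinforcementE hv' (overlap_obs obs ov) hW').
by rewrite (D_ER_obs hv hv' obs) (D_NM_obs hv hv' obs) dL'.
Qed.

End Sharpness.

Theorem proposition8 (R : realType) (Nt : finType) (Ylo Yhi : R)
    (L : law R Nt) :
  Ylo <= Yhi ->
  valid_law L -> standing_overlap L -> standing_bound Ylo Yhi L ->
  0 < VarXN L ->
  reinforcement L ->
  (* (i) *)
  (D_NM L <= D_ER L ->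
     [/\ 0 <= D_NM L, D_NM L <= Dpar L &
         Dpar L <= Num.min (D_MOBp Ylo Yhi L) (D_ER L)]) /\
  (* (ii) *)
  (D_ER L <= D_NM L ->
     [/\ Num.max (D_MOBm Ylo Yhi L) (D_ER L) <= Dpar L,
         Dpar L <= D_NM L & D_NM L <= 0]) /\
  (* (iii) sharpness of (i) *)
  (D_NM L <= D_ER L ->
     forall d : R, D_NM L <= d <= Num.min (D_MOBp Ylo Yhi L) (D_ER L) ->
     exists L' : law R Nt,
       [/\ valid_law L', same_observed L L', standing_bound Ylo Yhi L',
           reinforcement L' & Dpar L' = d]) /\
  (* (iii) sharpness of (ii) *)
  (D_ER L <= D_NM L ->
     forall d : R, Num.max (D_MOBm Ylo Yhi L) (D_ER L) <= d <= D_NM L ->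
     exists L' : law R Nt,
       [/\ valid_law L', same_observed L L', standing_bound Ylo Yhi L',
           reinforcement L' & Dpar L' = d]).
Proof.
move=> _ hv ov sb hW /(reinforcementE hv ov hW) /mulr_ge0_between [between_i between_ii].
have [sign_i sign_ii] :=
  scaled_same_sign hW (VarXN_lt_VarX hv ov) (D_NM_VarX_D_ER hv ov hW).
have /andP[MOBm_D D_MOBp] := Dpar_in_MOB Ylo Yhi hv ov sb.
have /andP[MOBm_NM NM_MOBp] := D_NM_in_MOB Ylo Yhi hv ov sb.
split; [|split; [|split]].
- move=> NM_ER; have /andP[NM_D D_ER] := between_i NM_ER.
  split; [exact: sign_i | exact: NM_D |].
  by rewrite le_min; apply/andP; split; [exact: D_MOBp | exact: D_ER].
- move=> ER_NM; have /andP[ER_D D_NM] := between_ii ER_NM.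
  split; [| exact: D_NM | exact: sign_ii].
  by rewrite ge_max; apply/andP; split; [exact: MOBm_D | exact: ER_D].
- move=> _ d /andP[NM_d]; rewrite le_min => /andP[d_MOBp d_ER].
  apply: reinforcement_sharp => //; last by rewrite mulr_ge0 // subr_ge0.
  by rewrite (le_trans MOBm_NM NM_d) d_MOBp.
- move=> _ d /andP[]; rewrite ge_max => /andP[MOBm_d ER_d] d_NM.
  apply: reinforcement_sharp => //; last by rewrite mulr_le0 // subr_le0.
  by rewrite MOBm_d (le_trans d_NM NM_MOBp).
Qed.
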